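(* Let $1\le k\le n-1$ and let $\Sigma=\mathbb{S}^k\times\mathbb{R}^{n-k}\subset\mathbb{R}^{n+1}$ be a self-shrinker. Let $C\subset\mathbb{S}^k$ be an open hemisphere (the intersection of $\mathbb{S}^k$ with an open half-space of $\mathbb{R}^{k+1}$ bounded by a hyperplane through the origin), and let $H\subset\mathbb{R}^{n-k}$ be an open half-space whose boundary is an $(n-k-1)$-dimensional linear subspace. Then $C\times H\subset\Sigma$ is stable.
   Context: $\mathbb{S}^k$ is the round sphere of radius $\sqrt{2k}$ centered at the origin of $\mathbb{R}^{k+1}$. Stability operator: $Lf=\Delta f-\tfrac12\langle\vec x,\nabla f\rangle+(|A|^2+\tfrac12)f$. A region $\Omega$ is stable if there is a function $u$ with $Lu=0$ and $u>0$ on $\Omega$. *)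

From Stdlib Require Import Reals Lra Lia.
Open Scope R_scope.

(* Points of R^N are functions nat -> R; a point of R^{n+1} is one whose
   coordinates of index > n vanish.  Coordinates 0..k are the S^k factor
   (x), coordinates k+1..n are the R^{n-k} factor (y_j = z (k+1+j)). *)

Fixpoint sumR (m : nat) (f : nat -> R) : R :=
  match m with O => 0 | S m' => sumR m' f + f m' end.

Definition in_Rn1 (n : nat) (z : nat -> R) : Prop :=
  forall m, (n < m)%nat -> z m = 0.

Definition upd (z : nat -> R) (i : nat) (t : R) : nat -> R :=
  fun m => if Nat.eqb m i then z m + t else z m.

Definition delta (i j : nat) : R := if Nat.eqb i j then 1 else 0.

Definition vnorm (N : nat) (v : nat -> R) : R := sqrt (sumR N (fun i => v i ^ 2)).

(* Sigma = S^k_{sqrt(2k)} x R^{n-k} inside R^{n+1} *)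
Definition cylinder (n k : nat) (z : nat -> R) : Prop :=
  in_Rn1 n z /\ sumR (S k) (fun i => z i ^ 2) = 2 * INR k.

(* Sigma is the zero set of phi(z) = |x|^2 - 2k; gradient and Hessian of phi. *)
Definition phi_grad (k : nat) (z : nat -> R) (i : nat) : R :=
  if Nat.leb i k then 2 * z i else 0.
Definition phi_hess (k : nat) (i j : nat) : R :=
  if (Nat.eqb i j && Nat.leb i k)%bool then 2 else 0.

Definition nu (n k : nat) (z : nat -> R) (i : nat) : R :=
  phi_grad k z i / vnorm (S n) (phi_grad k z).

Definition proj (n k : nat) (z : nat -> R) (i j : nat) : R :=
  delta i j - nu n k z i * nu n k z j.

Definition sff (n k : nat) (z : nat -> R) (i j : nat) : R :=
  sumR (S n) (fun p => sumR (S n) (fun q =>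
     proj n k z i p * phi_hess k p q * proj n k z q j))
  / vnorm (S n) (phi_grad k z).

Definition normA2 (n k : nat) (z : nat -> R) : R :=
  sumR (S n) (fun i => sumR (S n) (fun j => sff n k z i j ^ 2)).

Definition meanH (n k : nat) (z : nat -> R) : R :=
  sumR (S n) (fun i => sff n k z i i).

(* Laplace-Beltrami of (the restriction to Sigma of) an ambient function with
   gradient g and Hessian h at z:  tr(P Hess u P) - H <nu, grad u>. *)
Definition lapSigma (n k : nat) (z : nat -> R) (g : nat -> R) (h : nat -> nat -> R) : R :=
  sumR (S n) (fun i => sumR (S n) (fun j => proj n k z i j * h i j))
  - meanH n k z * sumR (S n) (fun i => nu n k z i * g i).

(* <x, grad_Sigma u> with x the position vector, grad_Sigma u = P grad u *)
Definition drift (n k : nat) (z : nat -> R) (g : nat -> R) : R :=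
  sumR (S n) (fun i => sumR (S n) (fun j => z i * proj n k z i j * g j)).

Definition Lop (n k : nat) (u : (nat -> R) -> R) (g : (nat -> R) -> nat -> R)
  (h : (nat -> R) -> nat -> nat -> R) (z : nat -> R) : R :=
  lapSigma n k z (g z) (h z) - / 2 * drift n k z (g z)
  + (normA2 n k z + / 2) * u z.

Definition is_C2 (n : nat) (u : (nat -> R) -> R) (g : (nat -> R) -> nat -> R)
  (h : (nat -> R) -> nat -> nat -> R) : Prop :=
  forall z, in_Rn1 n z -> forall i j, (i <= n)%nat -> (j <= n)%nat ->
    derivable_pt_lim (fun t => u (upd z i t)) 0 (g z i) /\
    derivable_pt_lim (fun t => g (upd z j t) i) 0 (h z i j) /\
    (forall eps, 0 < eps -> exists dlt, 0 < dlt /\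
       forall w, in_Rn1 n w -> (forall m, (m <= n)%nat -> Rabs (w m - z m) < dlt) ->
         Rabs (h w i j - h z i j) < eps).

Definition stable (n k : nat) (Omega : (nat -> R) -> Prop) : Prop :=
  exists u g h, is_C2 n u g h /\
    forall z, Omega z -> Lop n k u g h z = 0 /\ 0 < u z.

Definition hemi_half (n k : nat) (a b : nat -> R) (z : nat -> R) : Prop :=
  cylinder n k z /\
  0 < sumR (S k) (fun i => a i * z i) /\
  0 < sumR (n - k) (fun j => b j * z (S k + j)%nat).

(* The positive Jacobi field is u(x,y) = <a,x> <b,y>.  On the sphere factor
   <a,x> is a first eigenfunction (Delta = -1/2 on a sphere of radius
   sqrt(2k)) with tangential gradient, while <b,y> is harmonic and the drift
   scales it, -1/2 <y, grad> <b,y> = -1/2 <b,y>.  Since |A|^2 = 1/2 on Sigma,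
   L u = -u/2 - u/2 + (1/2 + 1/2) u = 0; and u > 0 on C x H by definition. *)

From Stdlib Require Import Reals Lra Lia FunctionalExtensionality.
From Coquelicot Require Import Coquelicot.
Open Scope R_scope.

Lemma sumR_ext m f g : (forall i, (i < m)%nat -> f i = g i) -> sumR m f = sumR m g.
Proof.
  induction m as [|m IH]; intros Hfg; simpl; [reflexivity|].
  rewrite IH by (intros; apply Hfg; lia). rewrite Hfg by lia. reflexivity.
Qed.

Lemma sumR_plus m f g : sumR m (fun i => f i + g i) = sumR m f + sumR m g.
Proof. induction m as [|m IH]; simpl; [ring|]. rewrite IH; ring. Qed.

Lemma sumR_minus m f g : sumR m (fun i => f i - g i) = sumR m f - sumR m g.
Proof. induction m as [|m IH]; simpl; [ring|]. rewrite IH; ring. Qed.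

Lemma sumR_scal m c f : sumR m (fun i => c * f i) = c * sumR m f.
Proof. induction m as [|m IH]; simpl; [ring|]. rewrite IH; ring. Qed.

Lemma sumR_const m c : sumR m (fun _ => c) = c * INR m.
Proof. induction m as [|m IH]; cbn [sumR]; [simpl; ring|]. rewrite IH, S_INR; ring. Qed.

Lemma sumR_swap m p (f : nat -> nat -> R) :
  sumR m (fun i => sumR p (fun j => f i j)) = sumR p (fun j => sumR m (fun i => f i j)).
Proof.
  induction m as [|m IH]; cbn [sumR].
  - rewrite sumR_const; ring.
  - rewrite IH, <- sumR_plus. reflexivity.
Qed.

Lemma sumR_delta_gen m i f :
  sumR m (fun p => delta i p * f p) = if Nat.ltb i m then f i else 0.
Proof.
  induction m as [|m IH]; cbn [sumR]; [reflexivity|]. rewrite IH. unfold delta.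
  destruct (Nat.eqb_spec i m), (Nat.ltb_spec i m), (Nat.ltb_spec i (S m));
    try lia; subst; ring.
Qed.

Lemma sumR_delta m i f : (i < m)%nat -> sumR m (fun p => delta i p * f p) = f i.
Proof. intros Hi. rewrite sumR_delta_gen. destruct (Nat.ltb_spec i m); [reflexivity|lia]. Qed.

Lemma delta_sym i j : delta i j = delta j i.
Proof. unfold delta. rewrite Nat.eqb_sym. reflexivity. Qed.

Lemma sumR_trunc m p f :
  (p <= m)%nat -> (forall i, (p <= i < m)%nat -> f i = 0) -> sumR m f = sumR p f.
Proof.
  induction m as [|m IH]; intros Hpm Hf.
  - replace p with 0%nat by lia. reflexivity.
  - destruct (Nat.eq_dec p (S m)) as [->|Hp]; [reflexivity|].
    cbn [sumR]. rewrite IH by (try lia; intros; apply Hf; lia).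
    rewrite (Hf m) by lia. ring.
Qed.

Lemma sumR_shift p m f : sumR (p + m) f = sumR p f + sumR m (fun j => f (p + j)%nat).
Proof.
  induction m as [|m IH]; [rewrite Nat.add_0_r; simpl; ring|].
  rewrite Nat.add_succ_r; cbn [sumR]. rewrite IH; ring.
Qed.

Definition dot (N : nat) (v w : nat -> R) : R := sumR N (fun i => v i * w i).

Lemma dot_lin N v w w' p q :
  dot N v (fun i => p * w i + q * w' i) = p * dot N v w + q * dot N v w'.
Proof.
  unfold dot. rewrite <- !sumR_scal, <- sumR_plus. apply sumR_ext; intros; ring.
Qed.

Lemma dot_sym N v w : dot N v w = dot N w v.
Proof. unfold dot. apply sumR_ext; intros; ring. Qed.

Definition orth_proj (u : nat -> R) (i j : nat) : R := delta i j - u i * u j.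

Section Projection.
Variables (N : nat) (u : nat -> R).

Lemma orth_proj_sym i j : orth_proj u i j = orth_proj u j i.
Proof. unfold orth_proj. rewrite delta_sym. ring. Qed.

Lemma orth_proj_apply i w :
  (i < N)%nat -> sumR N (fun j => orth_proj u i j * w j) = w i - u i * dot N u w.
Proof.
  intros Hi. unfold orth_proj, dot.
  rewrite (sumR_ext _ _ (fun j => delta i j * w j - u i * (u j * w j)))
    by (intros; ring).
  rewrite sumR_minus, sumR_scal, sumR_delta by exact Hi. reflexivity.
Qed.

Lemma orth_proj_bilin v w :
  sumR N (fun i => sumR N (fun j => orth_proj u i j * (v i * w j)))
  = dot N v w - dot N u v * dot N u w.
Proof.
  rewrite (sumR_ext _ _ (fun i => v i * w i - dot N u w * (u i * v i))).
  - rewrite sumR_minus, sumR_scal. unfold dot. ring.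
  - intros i Hi.
    rewrite (sumR_ext _ _ (fun j => v i * (orth_proj u i j * w j))) by (intros; ring).
    rewrite sumR_scal, orth_proj_apply by exact Hi. ring.
Qed.

Hypothesis u_unit : dot N u u = 1.

Lemma orth_proj_kills i : (i < N)%nat -> sumR N (fun j => orth_proj u i j * u j) = 0.
Proof. intros Hi. rewrite orth_proj_apply, u_unit by exact Hi. ring. Qed.

(* P^2 = P, read on the diagonal: the columns of P have squared norm P_jj. *)
Lemma orth_proj_idem j : (j < N)%nat -> sumR N (fun i => orth_proj u i j ^ 2) = orth_proj u j j.
Proof.
  intros Hj.
  rewrite (sumR_ext _ _ (fun i => orth_proj u j i * orth_proj u i j))
    by (intros; rewrite orth_proj_sym; ring).
  rewrite orth_proj_apply by exact Hj.
  replace (dot N u (fun i => orth_proj u i j)) with 0; [ring|].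
  rewrite <- (orth_proj_kills j Hj). unfold dot.
  apply sumR_ext; intros; rewrite orth_proj_sym; ring.
Qed.

End Projection.

Definition sph (k i : nat) : R := if Nat.leb i k then 1 else 0.
Definition xpart (k : nat) (z : nat -> R) (i : nat) : R := sph k i * z i.

Definition fx (k : nat) (a z : nat -> R) : R := sumR (S k) (fun i => a i * z i).
Definition gy (n k : nat) (b z : nat -> R) : R :=
  sumR (n - k) (fun j => b j * z (S k + j)%nat).
Definition lin_x (k : nat) (a : nat -> R) (i : nat) : R := sph k i * a i.
Definition lin_y (k : nat) (b : nat -> R) (i : nat) : R :=
  if Nat.leb (S k) i then b (i - S k)%nat else 0.

Ltac case_idx :=
  unfold xpart, lin_x, lin_y, sph, delta, phi_grad, phi_hess;
  repeat (first [ rewrite Nat.eqb_refl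
    | match goal with
      | |- context [Nat.eqb ?x ?y] => destruct (Nat.eqb_spec x y); [try subst|]
      | |- context [Nat.leb ?x ?y] => destruct (Nat.leb_spec x y)
      end ]); cbv beta iota delta [andb]; try (exfalso; lia).

Lemma phi_grad_xpart k z i : phi_grad k z i = 2 * xpart k z i.
Proof. case_idx; ring. Qed.

Lemma phi_hess_sph k p q : phi_hess k p q = 2 * sph k p * delta p q.
Proof. case_idx; ring. Qed.

Lemma nu_xpart n k z i :
  nu n k z i = 2 / vnorm (S n) (phi_grad k z) * xpart k z i.
Proof. unfold nu. rewrite phi_grad_xpart. unfold Rdiv. ring. Qed.

Lemma sph_nu n k z i : sph k i * nu n k z i = nu n k z i.
Proof. rewrite nu_xpart. case_idx; ring. Qed.

Lemma sph_delta k p j : sph k p * delta p j = sph k j * delta j p.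
Proof. case_idx; ring. Qed.

(* D P = D - nu nu^T, since nu only has sphere coordinates. *)
Lemma sph_proj n k z p j :
  sph k p * orth_proj (nu n k z) p j = sph k j * delta j p - nu n k z j * nu n k z p.
Proof.
  unfold orth_proj.
  replace (sph k p * (delta p j - nu n k z p * nu n k z j))
    with (sph k p * delta p j - (sph k p * nu n k z p) * nu n k z j) by ring.
  rewrite sph_nu, sph_delta. ring.
Qed.

Section Cylinder.
Variables (n k : nat) (z : nat -> R).
Hypothesis k_le_n : (k <= n)%nat.

Lemma sum_sph : sumR (S n) (sph k) = INR k + 1.
Proof.
  rewrite (sumR_trunc _ (S k)) by (try lia; intros; case_idx; ring).
  rewrite (sumR_ext _ _ (fun _ => 1)) by (intros; case_idx; ring).
  rewrite sumR_const, S_INR. ring.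
Qed.

Hypothesis on_cyl : cylinder n k z.

Lemma xpart_norm2 : dot (S n) (xpart k z) (xpart k z) = 2 * INR k.
Proof.
  destruct on_cyl as [_ Hx]. rewrite <- Hx. unfold dot.
  rewrite (sumR_trunc _ (S k)) by (try lia; intros; case_idx; ring).
  apply sumR_ext; intros; case_idx; ring.
Qed.

Hypothesis k_pos : (1 <= k)%nat.

Local Notation c := (vnorm (S n) (phi_grad k z)).

Lemma k_ge_1 : 1 <= INR k.
Proof. apply (le_INR 1). exact k_pos. Qed.

(* |grad phi|^2 = 4 |x|^2 = 8k along Sigma. *)
Lemma grad_norm_sq : c * c = 8 * INR k.
Proof.
  assert (Hsum : sumR (S n) (fun i => phi_grad k z i ^ 2) = 8 * INR k).
  { replace (8 * INR k) with (4 * dot (S n) (xpart k z) (xpart k z))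
      by (rewrite xpart_norm2; ring).
    unfold dot. rewrite <- sumR_scal.
    apply sumR_ext; intros; rewrite phi_grad_xpart; ring. }
  unfold vnorm. rewrite sqrt_sqrt; rewrite Hsum; [ring|]. pose proof k_ge_1; lra.
Qed.

Lemma grad_norm_pos : 0 < c.
Proof.
  pose proof grad_norm_sq. pose proof k_ge_1.
  destruct (sqrt_pos (sumR (S n) (fun i => phi_grad k z i ^ 2))) as [Hc|Hc]; [exact Hc|].
  unfold vnorm in *. rewrite <- Hc in *. lra.
Qed.

Lemma dot_nu w : dot (S n) (nu n k z) w = 2 / c * dot (S n) (xpart k z) w.
Proof. unfold dot. rewrite <- sumR_scal. apply sumR_ext; intros; rewrite nu_xpart; ring. Qed.

Lemma nu_unit : dot (S n) (nu n k z) (nu n k z) = 1.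
Proof.
  pose proof grad_norm_sq. pose proof grad_norm_pos.
  rewrite dot_nu, dot_sym, dot_nu, xpart_norm2.
  replace (2 / c * (2 / c * (2 * INR k))) with (8 * INR k / (c * c)) by (field; lra).
  rewrite <- grad_norm_sq. field. lra.
Qed.

Lemma sff_eq i j : (i < S n)%nat -> (j < S n)%nat ->
  sff n k z i j = 2 / c * (orth_proj (nu n k z) i j * sph k j).
Proof.
  intros Hi Hj. unfold sff. change (proj n k z) with (orth_proj (nu n k z)).
  rewrite (sumR_ext _ _ (fun p => 2 * (sph k j * (delta j p * orth_proj (nu n k z) i p))
                              - 2 * nu n k z j * (orth_proj (nu n k z) i p * nu n k z p))).
  - rewrite sumR_minus, !sumR_scal, sumR_delta, orth_proj_kills by
      (try apply nu_unit; assumption).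
    unfold Rdiv. ring.
  - intros p Hp.
    rewrite (sumR_ext _ _ (fun q => delta p q *
        (2 * orth_proj (nu n k z) i p * (sph k p * orth_proj (nu n k z) q j))))
      by (intros; rewrite phi_hess_sph; ring).
    rewrite sumR_delta, sph_proj by exact Hp. ring.
Qed.

Lemma meanH_eq : meanH n k z = 2 * INR k / c.
Proof.
  unfold meanH.
  rewrite (sumR_ext _ _ (fun i => 2 / c * (sph k i - nu n k z i * nu n k z i))).
  - rewrite sumR_scal, sumR_minus, sum_sph. fold (dot (S n) (nu n k z) (nu n k z)).
    rewrite nu_unit. unfold Rdiv. ring.
  - intros i Hi. rewrite sff_eq by exact Hi. unfold orth_proj.
    f_equal. rewrite <- (sph_nu n k z i). case_idx; ring.
Qed.

(* |A|^2 = 4k / |grad phi|^2 = 1/2, using P^2 = P. *)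
Lemma normA2_eq : normA2 n k z = / 2.
Proof.
  pose proof grad_norm_sq as Hc2. pose proof grad_norm_pos as Hc. pose proof k_ge_1.
  unfold normA2.
  rewrite (sumR_ext _ _ (fun i => sumR (S n) (fun j =>
             4 / (c * c) * (sph k j * orth_proj (nu n k z) i j ^ 2))))
    by (intros i Hi; apply sumR_ext; intros j Hj; rewrite sff_eq by assumption;
        replace (sph k j) with (sph k j ^ 2) at 2 by (case_idx; ring); field; lra).
  rewrite sumR_swap.
  rewrite (sumR_ext _ _ (fun j => 4 / (c * c) * (sph k j - nu n k z j * nu n k z j))).
  - rewrite sumR_scal, sumR_minus, sum_sph. fold (dot (S n) (nu n k z) (nu n k z)).
    rewrite nu_unit, Hc2. field. lra.
  - intros j Hj. rewrite sumR_scal, sumR_scal, orth_proj_idem by (try apply nu_unit; exact Hj).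
    f_equal. unfold orth_proj. rewrite <- (sph_nu n k z j). case_idx; ring.
Qed.
End Cylinder.

Definition u_test (n k : nat) (a b z : nat -> R) : R := fx k a z * gy n k b z.
Definition g_test (n k : nat) (a b z : nat -> R) (i : nat) : R :=
  gy n k b z * lin_x k a i + fx k a z * lin_y k b i.
Definition h_test (k : nat) (a b : nat -> R) (z : nat -> R) (i j : nat) : R :=
  lin_x k a i * lin_y k b j + lin_y k b i * lin_x k a j.

Section Gradients.
Variables (n k : nat) (a b z : nat -> R).

Lemma dot_xpart_lin_y : dot (S n) (xpart k z) (lin_y k b) = 0.
Proof.
  unfold dot. rewrite (sumR_ext _ _ (fun _ => 0)) by (intros; case_idx; ring).
  rewrite sumR_const. ring.
Qed.

Lemma dot_lin_x_lin_y : dot (S n) (lin_x k a) (lin_y k b) = 0.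
Proof.
  unfold dot. rewrite (sumR_ext _ _ (fun _ => 0)) by (intros; case_idx; ring).
  rewrite sumR_const. ring.
Qed.

Hypothesis k_le_n : (k <= n)%nat.

Lemma dot_xpart_lin_x : dot (S n) (xpart k z) (lin_x k a) = fx k a z.
Proof.
  unfold dot, fx. rewrite (sumR_trunc _ (S k)) by (try lia; intros; case_idx; ring).
  apply sumR_ext; intros; case_idx; ring.
Qed.

Lemma dot_z_lin_x : dot (S n) z (lin_x k a) = fx k a z.
Proof.
  unfold dot, fx. rewrite (sumR_trunc _ (S k)) by (try lia; intros; case_idx; ring).
  apply sumR_ext; intros; case_idx; ring.
Qed.

Lemma dot_z_lin_y : dot (S n) z (lin_y k b) = gy n k b z.
Proof.
  unfold dot, gy. replace (S n) with (S k + (n - k))%nat by lia.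
  rewrite sumR_shift, (sumR_ext (S k) _ (fun _ => 0)) by (intros; case_idx; ring).
  rewrite sumR_const, Rmult_0_l, Rplus_0_l.
  apply sumR_ext; intros j Hj. unfold lin_y.
  destruct (Nat.leb_spec (S k) (S k + j)); [|lia].
  replace (S k + j - S k)%nat with j by lia. ring.
Qed.
End Gradients.

Section StabilityOperator.
Variables (n k : nat) (a b z : nat -> R).
Hypothesis k_pos : (1 <= k)%nat.
Hypothesis k_le_n : (k <= n)%nat.
Hypothesis on_cyl : cylinder n k z.

Local Notation c := (vnorm (S n) (phi_grad k z)).
Local Notation F := (fx k a z).
Local Notation G := (gy n k b z).

Lemma dot_nu_lin_x : dot (S n) (nu n k z) (lin_x k a) = 2 / c * F.
Proof. rewrite dot_nu, dot_xpart_lin_x by exact k_le_n. reflexivity. Qed.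

Lemma dot_nu_lin_y : dot (S n) (nu n k z) (lin_y k b) = 0.
Proof. rewrite dot_nu, dot_xpart_lin_y. ring. Qed.

Lemma dot_nu_grad : dot (S n) (nu n k z) (g_test n k a b z) = 2 / c * F * G.
Proof. unfold g_test. rewrite dot_lin, dot_nu_lin_x, dot_nu_lin_y. ring. Qed.

(* Delta_Sigma u = tr(P Hess u) - H <nu, grad u> = -u/2: the trace term
   vanishes because lin_x and lin_y are orthogonal and lin_y is tangent. *)
Lemma lapSigma_u : lapSigma n k z (g_test n k a b z) (h_test k a b z) = - / 2 * u_test n k a b z.
Proof.
  pose proof (grad_norm_sq n k z k_le_n on_cyl k_pos) as Hc2.
  pose proof (grad_norm_pos n k z k_le_n on_cyl k_pos) as Hc.
  pose proof (k_ge_1 k k_pos).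
  unfold lapSigma. change (proj n k z) with (orth_proj (nu n k z)).
  rewrite (sumR_ext _ _ (fun i => sumR (S n) (fun j =>
              orth_proj (nu n k z) i j * (lin_x k a i * lin_y k b j)
            + orth_proj (nu n k z) i j * (lin_y k b i * lin_x k a j))))
    by (intros; apply sumR_ext; intros; unfold h_test; ring).
  rewrite (sumR_ext _ _ (fun i => _ + _)) by (intros; apply sumR_plus).
  rewrite sumR_plus, !orth_proj_bilin, (dot_sym _ (lin_y k b)), dot_lin_x_lin_y,
    dot_nu_lin_y, meanH_eq by assumption.
  fold (dot (S n) (nu n k z) (g_test n k a b z)). rewrite dot_nu_grad.
  unfold u_test. replace (INR k) with (c * c / 8) by lra. field. lra.
Qed.

(* The drift term: <z, P grad u> = <z, grad u> - <z,nu><nu, grad u> = u. *)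
Lemma drift_u : drift n k z (g_test n k a b z) = u_test n k a b z.
Proof.
  pose proof (grad_norm_sq n k z k_le_n on_cyl k_pos) as Hc2.
  pose proof (grad_norm_pos n k z k_le_n on_cyl k_pos) as Hc.
  pose proof (k_ge_1 k k_pos).
  unfold drift. change (proj n k z) with (orth_proj (nu n k z)).
  rewrite (sumR_ext _ _ (fun i => sumR (S n) (fun j =>
              orth_proj (nu n k z) i j * (z i * g_test n k a b z j))))
    by (intros; apply sumR_ext; intros; ring).
  rewrite orth_proj_bilin, dot_nu_grad, dot_nu.
  replace (dot (S n) (xpart k z) z) with (2 * INR k).
  2:{ rewrite <- (xpart_norm2 n k z) by assumption. unfold dot.
      apply sumR_ext; intros; case_idx; ring. }
  unfold g_test. rewrite dot_lin, dot_z_lin_x, dot_z_lin_y by exact k_le_n.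
  unfold u_test. replace (INR k) with (c * c / 8) by lra. field. lra.
Qed.

Lemma Lop_u_zero : Lop n k (u_test n k a b) (g_test n k a b) (h_test k a b) z = 0.
Proof.
  unfold Lop. rewrite lapSigma_u, drift_u, normA2_eq by assumption. ring.
Qed.
End StabilityOperator.

Lemma fx_upd k a z i t : fx k a (upd z i t) = fx k a z + t * lin_x k a i.
Proof.
  unfold fx.
  rewrite (sumR_ext _ _ (fun p => a p * z p + t * (delta i p * a p)))
    by (intros; unfold upd; case_idx; ring).
  rewrite sumR_plus, sumR_scal, sumR_delta_gen. unfold lin_x, sph.
  destruct (Nat.ltb_spec i (S k)), (Nat.leb_spec i k); try lia; ring.
Qed.

Lemma gy_upd n k b z i t : (i <= n)%nat -> gy n k b (upd z i t) = gy n k b z + t * lin_y k b i.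
Proof.
  intros Hi. unfold gy.
  rewrite (sumR_ext _ _ (fun j => b j * z (S k + j)%nat + t * (b j * delta i (S k + j))))
    by (intros; unfold upd; case_idx; ring).
  rewrite sumR_plus, sumR_scal. do 2 f_equal. unfold lin_y.
  destruct (Nat.leb_spec (S k) i).
  - rewrite (sumR_ext _ _ (fun j => delta (i - S k) j * b j)) by
      (intros j Hj; unfold delta;
       destruct (Nat.eqb_spec i (S k + j)), (Nat.eqb_spec (i - S k) j); try lia; ring).
    apply sumR_delta. lia.
  - rewrite (sumR_ext _ _ (fun _ => 0)) by
      (intros j Hj; unfold delta; destruct (Nat.eqb_spec i (S k + j)); try lia; ring).
    rewrite sumR_const. ring.
Qed.

(* u is a bilinear polynomial: g_test and h_test are its gradient and Hessian,
   and the Hessian is constant, hence continuous. *)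
Lemma u_test_C2 n k a b : is_C2 n (u_test n k a b) (g_test n k a b) (h_test k a b).
Proof.
  intros z _ i j Hi Hj. split; [|split].
  - replace (fun t => u_test n k a b (upd z i t)) with
      (fun t => (fx k a z + t * lin_x k a i) * (gy n k b z + t * lin_y k b i))
      by (apply functional_extensionality; intros t; unfold u_test;
          rewrite fx_upd, gy_upd by exact Hi; reflexivity).
    apply is_derive_Reals. auto_derive; [exact I|]. unfold g_test. ring.
  - replace (fun t => g_test n k a b (upd z j t) i) with
      (fun t => g_test n k a b z i + t * h_test k a b z i j)
      by (apply functional_extensionality; intros t; unfold g_test, h_test;
          rewrite fx_upd, gy_upd by exact Hj; ring).
    apply is_derive_Reals. auto_derive; [exact I|]. ring.
  - intros eps Heps. exists 1. split; [lra|]. intros w _ _. unfold h_test.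
    rewrite Rminus_diag, Rabs_R0. exact Heps.
Qed.

(* The nonvanishing hypotheses on a and b only make the region nonempty;
   the witness u works regardless. *)
Theorem proposition4p3 (n k : nat) (a b : nat -> R) :
  (1 <= k)%nat -> (k <= n - 1)%nat ->
  (exists i, (i <= k)%nat /\ a i <> 0) ->
  (exists j, (j < n - k)%nat /\ b j <> 0) ->
  stable n k (hemi_half n k a b).
Proof.
  intros k_pos Hk _ _.
  exists (u_test n k a b), (g_test n k a b), (h_test k a b).
  split; [apply u_test_C2|].
  intros z [on_cyl [Ha Hb]]. split.
  - apply Lop_u_zero; [assumption|lia|assumption].
  - apply Rmult_lt_0_compat; assumption.
Qed.
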